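(* Let $I$ be a countably infinite set, $\lambda,\rho\colon I\to I$ bijections, and $E$ a non-trivial directed $\lambda,\rho$-weakly commutative generalized pseudo effect algebra. If the kite pseudo effect algebra $K^{\lambda,\rho}_I(E)$ satisfies RDP$_1$ and has a least non-trivial normal ideal, then $K^{\lambda,\rho}_I(E)$ is isomorphic to $K^{\mathrm{id},\rho'}_{\mathbb Z}(E)$, where $\rho'(i)=i-1$ for $i\in\mathbb Z$.
   Context: A generalized pseudo effect algebra (GPEA) is a structure $(E;+,0)$ with partial binary $+$ and constant $0$ such that for all $a,b,c$: (GP1) $a+b$ and $(a+b)+c$ exist iff $b+c$ and $a+(b+c)$ exist, and then they are equal; (GP2) if $a+b$ exists there are $d,e$ with $a+b=d+a=b+e$; (GP3) left and right cancellation; (GP4) $a+b=0$ implies $a=b=0$; (GP5) $a+0=0+a=a$. Non-trivial: $E\neq\{0\}$. Order: $a\le b$ iff $a+c=b$ for some $c$; for $a\le b$, $b\ominus_\ell a$ is the unique $d$ with $d+a=b$, $a\ominus_r b$ the unique $e$ with $a+e=b$. Directed: any two elements have a common upper bound. RDP$_1$: whenever $a_1+a_2=b_1+b_2$ there are $c_{11},c_{12},c_{21},c_{22}$ with $a_1=c_{11}+c_{12}$, $a_2=c_{21}+c_{22}$, $b_1=c_{11}+c_{21}$, $b_2=c_{12}+c_{22}$, such that $0\le x\le c_{12}$, $0\le y\le c_{21}$ imply $x+y=y+x$. An ideal is a non-empty subset closed under existing sums and downward closed; normal if $x+N=N+x$ for all $x$ ($x+N=\{x+y\colon y\in N,\ x+y\text{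 defined}\}$, $N+x$ dually); non-trivial if $\neq\{0\}$; least non-trivial if contained in every non-trivial normal ideal. $\lambda,\rho$-weak commutativity: for all families $(f_j)$, $(a_i)$ in $E$ and all $i$: $f_{\rho^{-1}(i)}+a_i$ defined iff $a_i+f_{\lambda^{-1}(i)}$ defined, and $f_{\lambda^{-1}(i)}+a_i$ defined iff $a_i+f_{\rho^{-1}(i)}$ defined. Kite $K^{\lambda,\rho}_I(E)$ (a pseudo effect algebra): universe $E^I\uplus\overline E^I$, $\overline E=\{\bar a\colon a\in E\}$ a disjoint copy; $0=\langle 0\rangle$, $1=\langle\bar 0\rangle$; $\langle\bar a_i\rangle+\langle\bar b_i\rangle$ undefined; $\langle\bar a_i\colon i\in I\rangle+\langle f_j\colon j\in I\rangle=\langle\overline{f_{\rho^{-1}(i)}\ominus_r a_i}\rangle$ when $f_{\rho^{-1}(i)}\le a_i$ for all $i$; $\langle f_j\rangle+\langle\bar a_i\rangle=\langle\overline{a_i\ominus_\ell f_{\lambda^{-1}(i)}}\rangle$ when $f_{\lambda^{-1}(i)}\le a_i$ for all $i$; $\langle f_j\rangle+\langle g_j\rangle=\langle f_j+g_j\rangle$ when all coordinate sums are defined. Isomorphism means isomorphism of pseudo effect algebras. *)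

From Stdlib Require Import ZArith.
From mathcomp Require Import ssreflect ssrfun ssrbool.

Set Implicit Arguments.
Unset Strict Implicit.

(* A partial binary operation on T is encoded as a ternary relation:
   [psum a b c] means "a + b is defined and equals c". *)
Definition pop (T : Type) := T -> T -> T -> Prop.

Section Partial.
Variables (T : Type) (psum : pop T) (zero : T).

Definition defined (a b : T) : Prop := exists c, psum a b c.

Definition ple (a b : T) : Prop := exists c, psum a c b.

Definition is_GPEA : Prop :=
  (forall a b c c', psum a b c -> psum a b c' -> c = c') /\
  (forall a b c ab s, psum a b ab -> psum ab c s ->
       exists bc, psum b c bc /\ psum a bc s) /\
  (forall a b c bc s, psum b c bc -> psum a bc s ->
       exists ab, psum a b ab /\ psum ab c s) /\
  (forall a b s, psum a b s -> exists d e, psum d a s /\ psum b e s) /\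
  (forall a b c s, psum a b s -> psum a c s -> b = c) /\
  (forall a b c s, psum b a s -> psum c a s -> b = c) /\
  (forall a b, psum a b zero -> a = zero /\ b = zero) /\
  (forall a, psum a zero a /\ psum zero a a).

Definition nontrivial : Prop := exists a, a <> zero.

Definition directed : Prop := forall a b, exists c, ple a c /\ ple b c.

Definition RDP1 : Prop :=
  forall a1 a2 b1 b2 s, psum a1 a2 s -> psum b1 b2 s ->
  exists c11 c12 c21 c22,
    psum c11 c12 a1 /\ psum c21 c22 a2 /\
    psum c11 c21 b1 /\ psum c12 c22 b2 /\
    (forall x y, ple zero x -> ple x c12 -> ple zero y -> ple y c21 ->
       exists z, psum x y z /\ psum y x z).

Definition is_ideal (N : T -> Prop) : Prop :=
  (exists x, N x) /\
  (forall a b c, N a -> N b -> psum a b c -> N c) /\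
  (forall a b, N b -> ple a b -> N a).

Definition is_normal (N : T -> Prop) : Prop :=
  forall x z, (exists y, N y /\ psum x y z) <-> (exists y, N y /\ psum y x z).

Definition nontrivial_set (N : T -> Prop) : Prop := exists x, N x /\ x <> zero.

Definition has_least_nontrivial_normal_ideal : Prop :=
  exists N0, is_ideal N0 /\ is_normal N0 /\ nontrivial_set N0 /\
    forall N, is_ideal N -> is_normal N -> nontrivial_set N ->
      forall x, N0 x -> N x.

End Partial.

(* lambda,rho-weak commutativity; i = rho j = lambda k, i.e. j = rho^{-1} i,
   k = lambda^{-1} i. *)
Definition weakly_commutative (I E : Type) (psum : pop E) (lam rho : I -> I) : Prop :=
  forall (f a : I -> E) (i j k : I), rho j = i -> lam k = i ->
    (defined psum (f j) (a i) <-> defined psum (a i) (f k)) /\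
    (defined psum (f k) (a i) <-> defined psum (a i) (f j)).

(* The kite: inl f = <f_j>, inr a = <bar a_i>. *)
Definition kite (I E : Type) := ((I -> E) + (I -> E))%type.

Definition kite_sum (I E : Type) (psum : pop E) (lam rho : I -> I) : pop (kite I E) :=
  fun x y z =>
  match x, y, z with
  | inl f, inl g, inl h => forall i, psum (f i) (g i) (h i)
  (* <bar a> + <f> = <bar b>, b_i = f_{rho^-1 i} (-)_r a_i, i.e. f_{rho^-1 i} + b_i = a_i *)
  | inr a, inl f, inr b => forall j, psum (f j) (b (rho j)) (a (rho j))
  (* <f> + <bar a> = <bar b>, b_i = a_i (-)_l f_{lam^-1 i}, i.e. b_i + f_{lam^-1 i} = a_i *)
  | inl f, inr a, inr b => forall j, psum (b (lam j)) (f j) (a (lam j))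
  | _, _, _ => False
  end.

Definition kite_zero (I E : Type) (zero : E) : kite I E := inl (fun _ => zero).
Definition kite_one (I E : Type) (zero : E) : kite I E := inr (fun _ => zero).

Definition pea_isomorphic (T1 T2 : Type) (s1 : pop T1) (z1 o1 : T1)
  (s2 : pop T2) (z2 o2 : T2) : Prop :=
  exists phi : T1 -> T2, bijective phi /\ phi z1 = z2 /\ phi o1 = o2 /\
    forall x y z, s1 x y z <-> s2 (phi x) (phi y) (phi z).

Definition countably_infinite (I : Type) : Prop :=
  exists e : nat -> I, bijective e.

From Stdlib Require Import ZArith Lia Classical ClassicalEpsilon FunctionalExtensionality.
From mathcomp Require Import ssreflect ssrfun ssrbool eqtype ssrnat fintype.

Set Implicit Arguments.
Unset Strict Implicit.

(* Call a set S of indices closed when rho j' = lam j forces S j <-> S j'.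
   For closed S the elements <f> with f vanishing off S form a normal ideal of
   the kite; for complementary closed sets these ideals meet only in 0, so a
   least non-trivial normal ideal forces every non-empty closed set to be all
   of I.  Hence I is a single orbit of sigma = rho^-1 lam, and as I is
   infinite the orbit map n |-> sigma^n(i0) is a bijection Z -> I carrying
   (lam, rho) to (id, n |-> n - 1). *)

Lemma no_finite_cover {T : Type} {n : nat} {f e : nat -> T} :
  (forall x, exists2 r, r < n & f r = x) -> ~ injective e.
Proof.
move=> cover e_inj.
have [h hE] : exists h : 'I_n.+1 -> 'I_n, forall x, f (h x) = e x.
  apply: (choice (fun (x : 'I_n.+1) (r : 'I_n) => f r = e x)) => x.
  have [r r_lt <-] := cover (e x).
  by exists (Ordinal r_lt).
have h_inj : injective h by move=> x y hxy; apply/val_inj/e_inj; rewrite -!hE hxy.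
by have := leq_card h h_inj; rewrite !card_ord ltnn.
Qed.

Section Zorbit.
Variables (T : Type) (sigma tau : T -> T).
Hypotheses (sigmaK : cancel sigma tau) (tauK : cancel tau sigma).
Variable i0 : T.
Local Open Scope Z_scope.

Definition zorbit (n : Z) : T :=
  if 0 <=? n then iter (Z.to_nat n) sigma i0 else iter (Z.to_nat (- n)) tau i0.

Lemma zorbit_succ n : zorbit (n + 1) = sigma (zorbit n).
Proof.
rewrite /zorbit; case: (Z.leb_spec 0 n) => n_ge0.
- rewrite (proj2 (Z.leb_le 0 (n + 1))); last lia.
  by have -> : Z.to_nat (n + 1) = (Z.to_nat n).+1 by lia.
- have -> : Z.to_nat (- n) = (Z.to_nat (- (n + 1))).+1 by lia.
  rewrite /= tauK; case: (Z.leb_spec 0 (n + 1)) => // n1_ge0.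
  by have -> : n + 1 = 0 by lia.
Qed.

Lemma zorbit_pred n : zorbit (n - 1) = tau (zorbit n).
Proof. by rewrite -{2}(Z.sub_add 1 n) zorbit_succ sigmaK. Qed.

Lemma zorbit_range_sigma i :
  (exists n, zorbit n = i) <-> (exists n, zorbit n = sigma i).
Proof.
split=> -[n eq_n].
- by exists (n + 1); rewrite zorbit_succ eq_n.
- by exists (n - 1); rewrite zorbit_pred eq_n sigmaK.
Qed.

Lemma zorbit_periodic m p :
  zorbit m = zorbit (m + p) -> forall k, zorbit (k + p) = zorbit k.
Proof.
move=> eq_mp.
have shift d : zorbit (m + d) = zorbit (m + d + p).
  elim/Z.peano_ind: d => [|d IH|d IH]; first by rewrite Z.add_0_r.
  - rewrite -Z.add_1_r Z.add_assoc zorbit_succ IH -zorbit_succ; congr zorbit; lia.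
  - rewrite -Z.sub_1_r Z.add_sub_assoc zorbit_pred IH -zorbit_pred; congr zorbit; lia.
by move=> k; have -> : k = m + (k - m) by lia.
Qed.

Lemma zorbit_mod p :
  0 < p -> (forall k, zorbit (k + p) = zorbit k) -> forall k, zorbit (k mod p) = zorbit k.
Proof.
move=> p_gt0 per.
have per_mul q r : zorbit (r + p * q) = zorbit r.
  elim/Z.peano_ind: q => [|q IH|q IH]; first by rewrite Z.mul_0_r Z.add_0_r.
  - by rewrite -IH -(per (r + p * q)); congr zorbit; lia.
  - by rewrite -IH -(per (r + p * Z.pred q)); congr zorbit; lia.
move=> k; rewrite -(per_mul (k / p)) Z.add_comm -Z.div_mod //; lia.
Qed.

Lemma zorbit_injective :
  (exists e : nat -> T, injective e) -> (forall i, exists n, zorbit n = i) ->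
  injective zorbit.
Proof.
move=> [e e_inj] onto.
suff aperiodic m p : 0 < p -> zorbit m <> zorbit (m + p).
  move=> m n eq_mn; case: (Z.lt_trichotomy m n) => [lt|[//|gt]]; exfalso.
  - by apply: (aperiodic m (n - m)); [lia | rewrite Zplus_minus].
  - by apply: (aperiodic n (m - n)); [lia | rewrite Zplus_minus].
move=> p_gt0 /zorbit_periodic per; apply: (no_finite_cover
  (f := fun r => zorbit (Z.of_nat r)) (n := Z.to_nat p) _ e_inj).
move=> i; have [k <-] := onto i; have := Z.mod_pos_bound k p p_gt0 => bound.
exists (Z.to_nat (k mod p)); first by apply/ltP; lia.
by rewrite Z2Nat.id ?zorbit_mod //; lia.
Qed.

Lemma zorbit_bijective :
  (exists e : nat -> T, injective e) -> (forall i, exists n, zorbit n = i) ->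
  bijective zorbit.
Proof.
move=> infinite onto; have [inv invK] := choice _ onto.
exists inv => // n; exact: (zorbit_injective infinite onto).
Qed.

End Zorbit.

Section GPEAFacts.
Variables (E : Type) (psum : pop E) (zero : E).
Hypothesis gpea : is_GPEA psum zero.

Lemma psum0l_eq u v : psum zero u v -> v = u.
Proof. by case: gpea => [fn [_ [_ [_ [_ [_ [_ unit]]]]]]] /fn; apply; case: (unit u). Qed.

Lemma psum0r_eq u v : psum u zero v -> v = u.
Proof. by case: gpea => [fn [_ [_ [_ [_ [_ [_ unit]]]]]]] /fn; apply; case: (unit u). Qed.

Lemma psum_eq0l a b : psum a b zero -> a = zero.
Proof. by case: gpea => [_ [_ [_ [_ [_ [_ [pos _]]]]]]] /pos []. Qed.

Lemma psum_swap_r x y z : psum x y z -> exists y', psum y' x z /\ (y = zero -> y' = zero).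
Proof.
case: gpea => [_ [_ [_ [gp2 [_ [cancel_r [_ unit]]]]]]] s.
have [d [_ [dx _]]] := gp2 _ _ _ s; exists d; split=> // y0.
move: s dx; rewrite y0 => /psum0r_eq -> dx.
exact: (cancel_r x) dx (proj2 (unit x)).
Qed.

Lemma psum_swap_l x y z : psum y x z -> exists y', psum x y' z /\ (y = zero -> y' = zero).
Proof.
case: gpea => [_ [_ [_ [gp2 [cancel_l [_ [_ unit]]]]]]] s.
have [_ [e [_ xe]]] := gp2 _ _ _ s; exists e; split=> // y0.
move: s xe; rewrite y0 => /psum0l_eq -> xe.
exact: (cancel_l x) xe (proj1 (unit x)).
Qed.

End GPEAFacts.

Section SupportIdeals.
Variables (I E : Type) (psum : pop E) (zero : E) (lam rho linv rinv : I -> I).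
Hypotheses (gpea : is_GPEA psum zero) (linvK : cancel linv lam) (rinvK : cancel rinv rho).
Local Notation ksum := (kite_sum psum lam rho).

Definition lr_closed (S : I -> Prop) : Prop :=
  forall j j', rho j' = lam j -> (S j <-> S j').

Definition supported_on (S : I -> Prop) (x : kite I E) : Prop :=
  if x is inl f then forall i, ~ S i -> f i = zero else False.

Lemma supported_choice (S : I -> Prop) (P : I -> E -> Prop) :
  (forall i, exists y, P i y /\ (~ S i -> y = zero)) ->
  exists g, supported_on S (inl g) /\ forall i, P i (g i).
Proof.
by move=> /choice [g gP]; exists g; split=> i; [move/(proj2 (gP i)) | case: (gP i)].
Qed.

Lemma supported_on_ideal S : is_ideal ksum (supported_on S).
Proof.
split; first by exists (inl (fun _ => zero)).
split.
- move=> [f|//] [g|//] [h|//] /= Nf Ng fgh i notSi.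
  by move: (fgh i); rewrite Nf ?Ng // => /(psum0l_eq gpea).
- move=> a [f|//] /= Nf [c]; case: a c => [g|a] [c|c] //= gcf i notSi.
  by move: (gcf i); rewrite Nf // => /(psum_eq0l gpea).
Qed.

Lemma supported_on_normal S : lr_closed S -> is_normal ksum (supported_on S).
Proof.
move=> closed x z; split=> -[y [Ny]]; case: y Ny => [f|f /= []] Nf.
- case: x z => [h|a] [w|w] //= sum.
  + suff /(@supported_choice S (fun i y => psum y (h i) (w i))) [g [Ng sum']] :
        forall i, exists y, psum y (h i) (w i) /\ (~ S i -> y = zero) by exists (inl g).
    move=> i; have [y [s y0]] := psum_swap_r gpea (sum i).
    by exists y; split=> // /Nf /y0.
  + suff /(@supported_choice S (fun j y => psum (w (lam j)) y (a (lam j)))) [g [Ng sum']] :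
        forall j, exists y, psum (w (lam j)) y (a (lam j)) /\ (~ S j -> y = zero)
      by exists (inl g).
    move=> j; have jj' := rinvK (lam j).
    have [y [s y0]] := psum_swap_l gpea (sum (rinv (lam j))); rewrite jj' in s.
    by exists y; split=> // /(closed _ _ jj') /Nf /y0.
- case: x z => [h|a] [w|w] //= sum.
  + suff /(@supported_choice S (fun i y => psum (h i) y (w i))) [g [Ng sum']] :
        forall i, exists y, psum (h i) y (w i) /\ (~ S i -> y = zero) by exists (inl g).
    move=> i; have [y [s y0]] := psum_swap_l gpea (sum i).
    by exists y; split=> // /Nf /y0.
  + suff /(@supported_choice S (fun j y => psum y (w (rho j)) (a (rho j)))) [g [Ng sum']] :
        forall j, exists y, psum y (w (rho j)) (a (rho j)) /\ (~ S j -> y = zero)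
      by exists (inl g).
    move=> j; have jj' := linvK (rho j).
    have [y [s y0]] := psum_swap_r gpea (sum (linv (rho j))); rewrite jj' in s.
    by exists y; split=> // notSj; apply/y0/Nf => /(closed _ _ (esym jj')).
Qed.

Lemma supported_on_nontrivial S :
  nontrivial zero -> (exists i, S i) -> nontrivial_set (kite_zero I zero) (supported_on S).
Proof.
move=> [e e_nz] [i Si].
exists (inl (fun j => if excluded_middle_informative (S j) then e else zero)); split.
- by move=> j /= notSj; case: excluded_middle_informative.
- by move=> [] /(f_equal (fun f => f i)); case: excluded_middle_informative.
Qed.

Lemma lr_closed_full S :
  nontrivial zero -> has_least_nontrivial_normal_ideal ksum (kite_zero I zero) ->
  lr_closed S -> (exists i, S i) -> forall i, S i.
Proof.
move=> ntE [N0 [_ [_ [[x [N0x x_nz]] least]]]] closed S_ne i.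
apply: NNPP => notSi.
have closedC : lr_closed (fun j => ~ S j) by move=> j j' /closed; tauto.
have := least _ (supported_on_ideal S) (supported_on_normal closed)
  (supported_on_nontrivial ntE S_ne) x N0x.
have := least _ (supported_on_ideal _) (supported_on_normal closedC)
  (supported_on_nontrivial ntE (ex_intro _ i notSi)) x N0x.
case: x x_nz {N0x} => [f|//] f_nz /= offC offS; apply: f_nz.
congr inl; apply: functional_extensionality => j.
by case: (classic (S j)) => Sj; [apply: offC | apply: offS].
Qed.

End SupportIdeals.

Lemma kite_iso_reindex (I J E : Type) (psum : pop E) (zero : E)
    (lam rho : I -> I) (pi : J -> J) (ps : J -> I) :
  bijective ps -> bijective lam -> (forall n, rho (ps n) = lam (ps (pi n))) ->
  pea_isomorphic (kite_sum psum lam rho) (kite_zero I zero) (kite_one I zero)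
    (kite_sum psum (fun j : J => j) pi) (kite_zero J zero) (kite_one J zero).
Proof.
move=> [psinv psK psinvK] [linv lamK linvK] ps_rel.
pose phi (x : kite I E) : kite J E :=
  match x with inl f => inl (f \o ps) | inr a => inr (a \o lam \o ps) end.
exists phi; split; last split; [|by []|split; [by []|]].
- exists (fun y : kite J E => match y with
           | inl g => inl (g \o psinv) | inr b => inr (b \o psinv \o linv) end).
  + by case=> f /=; f_equal; apply: functional_extensionality => i /=;
      rewrite ?psinvK ?linvK.
  + by case=> f /=; f_equal; apply: functional_extensionality => i /=;
      rewrite ?lamK ?psK.
- case=> [f|a] [g|g] [h|h] //=; split=> sum.
  + by move=> n; apply: sum.
  + by move=> i; rewrite -(psinvK i); apply: sum.
  + by move=> n; apply: sum.
  + by move=> j; rewrite -(psinvK j); apply: sum.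
  + by move=> n; rewrite -ps_rel; apply: sum.
  + by move=> j; rewrite -(psinvK j) ps_rel; apply: sum.
Qed.

Theorem theorem4p9 (I : Type) (lam rho : I -> I) (E : Type) (psum : pop E) (zero : E) :
  countably_infinite I ->
  bijective lam -> bijective rho ->
  is_GPEA psum zero -> nontrivial zero -> directed psum ->
  weakly_commutative psum lam rho ->
  RDP1 (kite_sum psum lam rho) (kite_zero I zero) ->
  has_least_nontrivial_normal_ideal (kite_sum psum lam rho) (kite_zero I zero) ->
  pea_isomorphic (kite_sum psum lam rho) (kite_zero I zero) (kite_one I zero)
    (kite_sum psum (fun i : Z => i) (fun i : Z => (i - 1)%Z))
    (kite_zero Z zero) (kite_one Z zero).
Proof.
move=> [e e_bij] lam_bij rho_bij gpea ntE _ _ _ least.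
have [linv lamK linvK] := lam_bij; have [rinv rhoK rinvK] := rho_bij.
pose sigma i := rinv (lam i); pose tau i := linv (rho i).
have sigmaK : cancel sigma tau by move=> i; rewrite /tau /sigma rinvK lamK.
have tauK : cancel tau sigma by move=> i; rewrite /sigma /tau linvK rhoK.
pose ps := zorbit sigma tau (e 0).
have ps_rel n : rho (ps n) = lam (ps (n - 1)%Z).
  by rewrite -{1}(Z.sub_add 1 n) /ps zorbit_succ // /sigma rinvK.
have ps_onto : forall i, exists n, ps n = i.
  apply: (lr_closed_full gpea linvK rinvK ntE least); last by exists (e 0), 0%Z.
  move=> j j' jj'; have -> : j' = sigma j by apply: (can_inj rhoK); rewrite rinvK.
  exact: zorbit_range_sigma.
have ps_bij : bijective ps.
  exact: (zorbit_bijective sigmaK tauK (ex_intro _ e (bij_inj e_bij)) ps_onto).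
exact: kite_iso_reindex ps_bij lam_bij ps_rel.
Qed.
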